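(* Let $\alpha$ be a concentrated system of weights for rank $r$ over $D$ (with $|D|=n$), and let $I=\{1,\dots,r\}$. Let $0<r'<r$ and for each $x\in D$ let $I'(x)\subsetneq I$ be a nonempty subset with $|I'(x)|=r'$. Then $$\left|\sum_{x\in D}\left(r\sum_{i\in I'(x)}\alpha_i(x)-r'\sum_{i\in I}\alpha_i(x)\right)\right|<1.$$
   Context: A full flag system of weights for rank $r$ over a finite set $D$ of $n\ge1$ points is $\alpha=\{(\alpha_1(x),\dots,\alpha_r(x))\}_{x\in D}$ with $0\le\alpha_1(x)<\cdots<\alpha_r(x)<1$. It is concentrated if $\alpha_r(x)-\alpha_1(x)<\frac{4}{nr^2}$ for all $x\in D$. *)

From mathcomp Require Import all_boot all_order all_algebra.
From mathcomp Require Import reals.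
Set Implicit Arguments. Unset Strict Implicit. Unset Printing Implicit Defensive.
Import Order.TTheory GRing.Theory Num.Theory.
Local Open Scope ring_scope.

(* A full flag system of weights for rank r over a finite set D:
   for each x, 0 <= alpha_1(x) < ... < alpha_r(x) < 1.
   Indices 1..r are represented by 'I_r (0-based). *)
Definition full_flag_weights (R : realType) (D : finType) (r : nat)
    (alpha : D -> 'I_r -> R) : Prop :=
  forall x : D,
    (forall i : 'I_r, 0 <= alpha x i) /\
    (forall i j : 'I_r, (i < j)%N -> alpha x i < alpha x j) /\
    (forall i : 'I_r, alpha x i < 1).

Definition concentrated (R : realType) (D : finType) (r : nat)
    (alpha : D -> 'I_r -> R) : Prop :=
  forall x : D, forall (i j : 'I_r),
    nat_of_ord i = 0%N -> nat_of_ord j = r.-1 ->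
    alpha x j - alpha x i < 4 / (#|D|%:R * (r%:R ^+ 2)).

(** For each point x, let m and M be the smallest and largest weight. A term
    r * (sum over I'(x)) - r' * (sum over I) compares a subset of r' weights with
    the complementary r - r' weights, so its absolute value is at most
    r'(r - r')(M - m) <= r^2 (M - m) / 4 < 1/n by concentration. Summing the n
    terms gives a total below 1. *)
From mathcomp Require Import all_boot all_order all_algebra.
From mathcomp Require Import reals.
From mathcomp Require Import ring lra.
Set Implicit Arguments. Unset Strict Implicit. Unset Printing Implicit Defensive.
Import Order.TTheory GRing.Theory Num.Theory.
Local Open Scope ring_scope.

Lemma ler_sum_bounds (R : numDomainType) (I : finType) (A : {pred I})
    (a : I -> R) (m M : R) :
  (forall i, m <= a i <= M) ->
  #|A|%:R * m <= \sum_(i in A) a i <= #|A|%:R * M.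
Proof.
move=> hb; rewrite !mulr_natl -!sumr_const.
by apply/andP; split; apply: ler_sum => i _; case/andP: (hb i).
Qed.

Lemma norm_subset_sum_deviation_le (R : realDomainType) (I : finType)
    (A : {set I}) (a : I -> R) (m M : R) :
  (forall i, m <= a i <= M) ->
  `| #|I|%:R * (\sum_(i in A) a i) - #|A|%:R * (\sum_i a i) |
     <= #|A|%:R * #|~: A|%:R * (M - m).
Proof.
move=> hb.
have -> : \sum_i a i = \sum_(i in A) a i + \sum_(i in ~: A) a i.
  by rewrite (bigID [in A]) /=; congr (_ + _); apply: eq_bigl => i; rewrite in_setC.
have /andP[lA uA] := ler_sum_bounds A hb.
have /andP[lC uC] := ler_sum_bounds (~: A) hb.
rewrite -(cardsC A) natrD.
set k := #|A|%:R in lA uA *; set K := #|~: A|%:R in lC uC *.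
have -> : (k + K) * (\sum_(i in A) a i) - k * (\sum_(i in A) a i + \sum_(i in ~: A) a i)
          = K * (\sum_(i in A) a i) - k * (\sum_(i in ~: A) a i) by ring.
have /andP[lKA uKA] : K * (k * m) <= K * (\sum_(i in A) a i) <= K * (k * M).
  by apply/andP; split; apply: ler_wpM2l.
have /andP[lkC ukC] : k * (K * m) <= k * (\sum_(i in ~: A) a i) <= k * (K * M).
  by apply/andP; split; apply: ler_wpM2l.
rewrite ler_norml; apply/andP; split; lra.
Qed.

Lemma mulr_lt_inv_of_quarter_bound (R : realFieldType) (c d s t : R) :
  0 < s -> 0 < t -> 0 <= d -> c *+ 4 <= s -> d < 4 / (t * s) -> c * d < t^-1.
Proof.
move=> s0 t0 d0 cs ds.
rewrite ltr_pdivlMr ?mulr_gt0 // in ds.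
rewrite -(ltr_pM2l t0) mulfV ?gt_eqF //.
have : c *+ 4 * (t * d) <= s * (t * d) by apply: ler_wpM2r; rewrite // mulr_ge0 // ltW.
lra.
Qed.

Lemma norm_sum_lt (R : numDomainType) (I : finType) (F : I -> R) (e : R) :
  (0 < #|I|)%N -> (forall i, `|F i| < e) -> `|\sum_i F i| < #|I|%:R * e.
Proof.
move=> hI hF; apply: le_lt_trans (ler_norm_sum _ _ _) _.
rewrite mulr_natl -sumr_const; apply: ltr_sum => //.
by apply/hasP; exists (enum_val (Ordinal hI)); rewrite ?mem_enum.
Qed.

Section FlagWeights.

Variables (R : realType) (D : finType) (r : nat) (alpha : D -> 'I_r -> R).
Hypothesis flag : full_flag_weights alpha.

Lemma full_flag_weights_mono x (i j : 'I_r) :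
  (i <= j)%N -> alpha x i <= alpha x j.
Proof.
have [_ [incr _]] := flag x.
rewrite leq_eqVlt => /orP[/eqP/val_inj -> // | ij].
exact/ltW/incr.
Qed.

Lemma full_flag_weights_bounded x (i0 il : 'I_r) :
  nat_of_ord i0 = 0%N -> nat_of_ord il = r.-1 ->
  forall i, alpha x i0 <= alpha x i <= alpha x il.
Proof.
move=> h0 hl i; rewrite !full_flag_weights_mono // ?h0 ?hl //.
by rewrite -ltnS prednK // (leq_ltn_trans _ (ltn_ord i)).
Qed.

End FlagWeights.

Theorem lemma2p5 (R : realType) (D : finType) (r r' : nat)
    (alpha : D -> 'I_r -> R) (I' : D -> {set 'I_r}) :
  (0 < #|D|)%N ->
  full_flag_weights alpha ->
  concentrated alpha ->
  (0 < r')%N -> (r' < r)%N ->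
  (forall x : D, I' x != set0 /\ I' x != [set: 'I_r] /\ #|I' x| = r') ->
  `| \sum_(x : D) (r%:R * (\sum_(i in I' x) alpha x i)
                   - r'%:R * (\sum_(i : 'I_r) alpha x i)) | < 1.
Proof.
move=> hD flag conc _ hr' hI.
have r0 : (0 < r)%N by apply: leq_ltn_trans hr'.
have rl : (r.-1 < r)%N by rewrite ltn_predL.
pose i0 := Ordinal r0; pose il := Ordinal rl.
have n0 : 0 < #|D|%:R :> R by rewrite ltr0n.
apply: lt_le_trans (norm_sum_lt (e := #|D|%:R^-1) hD _) _; last by rewrite mulfV ?gt_eqF.
move=> x; have [_ [_ cardI']] := hI x.
have hb := full_flag_weights_bounded flag x (i0 := i0) (il := il) erefl erefl.
rewrite -[X in X%:R * _](card_ord r) -cardI'.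
apply: le_lt_trans (norm_subset_sum_deviation_le _ hb) _.
rewrite [#|~: _|]cardsCs setCK card_ord cardI'.
apply: mulr_lt_inv_of_quarter_bound n0 _ _ (conc x i0 il erefl erefl).
- by rewrite exprn_gt0 ?ltr0n.
- by rewrite subr_ge0; case/andP: (hb il).
- by rewrite -{2}(subnKC (ltnW hr')) natrD; apply: leif_AGM2_scaled.
Qed.
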